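(* If $M$ is typable in $\lambda^{\triangleright}$ (i.e. $\Gamma\vdash^A M:\tau$ for some $\Gamma,A,\tau$), then there is no infinite reduction sequence $M\to N_1\to N_2\to\cdots$.
   Context: Calculus $\lambda^{\triangleright}$. Let $\mathcal{G}$ be a countably infinite set of transition variables $\alpha,\beta,\dots$. A transition (or stage) $A,B$ is a finite sequence of transition variables; $\varepsilon$ is the empty sequence and $AB$ is concatenation. Types: $\tau ::= b \mid \tau\to\tau \mid \triangleright_\alpha\tau \mid \forall\alpha.\tau$ ($b$ ranges over base types; $\alpha$ is bound in $\forall\alpha.\tau$). Terms: $M ::= x \mid M\,M \mid \lambda x{:}\tau.M \mid \blacktriangleright_\alpha M \mid \blacktriangleleft_\alpha M \mid \Lambda\alpha.M \mid M\,A$ (quotation, unquotation, transition abstraction, and instantiation by a transition $A$); $x$ is bound in $\lambda x{:}\tau.M$ and $\alpha$ in $\Lambda\alpha.M$; bound variables are tacitly renamed. For $A=\alpha_1\cdots\alpha_n$ write $\triangleright_A\tau=\triangleright_{\alpha_1}\cdots\triangleright_{\alpha_n}\tau$, $\blacktriangleright_A M=\blacktriangleright_{\alpha_1}\cdots\blacktriangleright_{\alpha_n}M$, and $\blacktriangleleft_A M=\blacktriangleleft_{\alpha_n}\cdots\blacktriangleleft_{\alpha_1}M$ (all three are the identity when $A=\varepsilon$). Capture-avoiding substitution $\tau[\alpha:=B]$, $M[\alpha:=B]$, $A[\alpha:=B]$ of a transition for a transition variable replaces $\alpha$ by $B$ in transitions and replaces $\triangleright_\alpha,\blacktriangleright_\alpha,\blacktriangleleft_\alpha$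 by $\triangleright_B,\blacktriangleright_B,\blacktriangleleft_B$ respectively. $M[x:=N]$ is capture-avoiding term substitution. $\mathrm{FTV}$ denotes free transition variables. A context $\Gamma$ is a finite set $\{x_1:\tau_1@A_1,\dots,x_n:\tau_n@A_n\}$ with distinct $x_i$; $\mathrm{FTV}(\Gamma)=\bigcup_i(\mathrm{FTV}(\tau_i)\cup\mathrm{FTV}(A_i))$. Typing judgments $\Gamma\vdash^A M:\tau$ are derived by: (Var) $x:\tau@A\in\Gamma \Rightarrow \Gamma\vdash^A x:\tau$; (Abs) $\Gamma,x:\tau@A\vdash^A M:\sigma \Rightarrow \Gamma\vdash^A\lambda x{:}\tau.M:\tau\to\sigma$; (App) $\Gamma\vdash^A M:\tau\to\sigma$ and $\Gamma\vdash^A N:\tau$ $\Rightarrow \Gamma\vdash^A M\,N:\sigma$; (Quote) $\Gamma\vdash^{A\alpha}M:\tau \Rightarrow \Gamma\vdash^A\blacktriangleright_\alpha M:\triangleright_\alpha\tau$; (Unquote) $\Gamma\vdash^A M:\triangleright_\alpha\tau \Rightarrow \Gamma\vdash^{A\alpha}\blacktriangleleft_\alpha M:\tau$; (Gen) $\Gamma\vdash^A M:\tau$ and $\alpha\notin\mathrm{FTV}(\Gamma)\cup\mathrm{FTV}(A)$ $\Rightarrow \Gamma\vdash^A\Lambda\alpha.M:\forall\alpha.\tau$; (Ins) $\Gamma\vdash^A M:\forall\alpha.\tau \Rightarrow \Gamma\vdash^A M\,B:\tau[\alpha:=B]$. Reduction $M\to N$ is the least relation closed under all term constructors (reduction may occur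 anywhere, including under binders and quotations) containing $(\lambda x{:}\tau.M)\,N\to M[x:=N]$, $\blacktriangleleft_\alpha\blacktriangleright_\alpha M\to M$, and $(\Lambda\alpha.M)\,A\to M[\alpha:=A]$. *)

(* Calculus lambda^triangleright with de Bruijn indices
   for both term variables and transition variables. *)
From Stdlib Require Import List Arith.
Import ListNotations.

Definition tvar := nat.
Definition trans := list tvar.

Inductive ty : Type :=
| TBase : nat -> ty
| TArr  : ty -> ty -> ty
| TQ    : tvar -> ty -> ty
| TAll  : ty -> ty.

Inductive tm : Type :=
| Var     : nat -> tm
| App     : tm -> tm -> tm
| Lam     : ty -> tm -> tm
| Quote   : tvar -> tm -> tm
| Unquote : tvar -> tm -> tm
| TLam    : tm -> tm                (* Lambda alpha. M (binds trans. index 0) *)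
| TApp    : tm -> trans -> tm.

Definition tsubst := tvar -> trans.

Definition tr_subst (s : tsubst) (A : trans) : trans := flat_map s A.

Definition up_t (s : tsubst) : tsubst :=
  fun n => match n with 0 => [0] | S m => map S (s m) end.

Definition tyQs (A : trans) (t : ty) : ty := fold_right TQ t A.
Definition tmQs (A : trans) (M : tm) : tm := fold_right Quote M A.
(* black <|_A M = <|_{an} ... <|_{a1} M *)
Definition tmUs (A : trans) (M : tm) : tm :=
  fold_left (fun N a => Unquote a N) A M.

Fixpoint ty_tsubst (s : tsubst) (t : ty) : ty :=
  match t with
  | TBase b => TBase b
  | TArr t1 t2 => TArr (ty_tsubst s t1) (ty_tsubst s t2)
  | TQ a t' => tyQs (s a) (ty_tsubst s t')
  | TAll t' => TAll (ty_tsubst (up_t s) t')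
  end.

Fixpoint tm_tsubst (s : tsubst) (M : tm) : tm :=
  match M with
  | Var x => Var x
  | App M1 M2 => App (tm_tsubst s M1) (tm_tsubst s M2)
  | Lam t M' => Lam (ty_tsubst s t) (tm_tsubst s M')
  | Quote a M' => tmQs (s a) (tm_tsubst s M')
  | Unquote a M' => tmUs (s a) (tm_tsubst s M')
  | TLam M' => TLam (tm_tsubst (up_t s) M')
  | TApp M' A => TApp (tm_tsubst s M') (tr_subst s A)
  end.

Definition tshift_s : tsubst := fun n => [S n].
Definition tinst (B : trans) : tsubst :=
  fun n => match n with 0 => B | S m => [m] end.

Fixpoint tm_ren (r : nat -> nat) (M : tm) : tm :=
  match M with
  | Var x => Var (r x)
  | App M1 M2 => App (tm_ren r M1) (tm_ren r M2)
  | Lam t M' => Lam t (tm_ren (fun n => match n with 0 => 0 | S m => S (r m) end) M')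
  | Quote a M' => Quote a (tm_ren r M')
  | Unquote a M' => Unquote a (tm_ren r M')
  | TLam M' => TLam (tm_ren r M')
  | TApp M' A => TApp (tm_ren r M') A
  end.

Definition up_s (s : nat -> tm) : nat -> tm :=
  fun n => match n with 0 => Var 0 | S m => tm_ren S (s m) end.

Fixpoint tm_subst (s : nat -> tm) (M : tm) : tm :=
  match M with
  | Var x => s x
  | App M1 M2 => App (tm_subst s M1) (tm_subst s M2)
  | Lam t M' => Lam t (tm_subst (up_s s) M')
  | Quote a M' => Quote a (tm_subst s M')
  | Unquote a M' => Unquote a (tm_subst s M')
  | TLam M' => TLam (tm_subst (fun x => tm_tsubst tshift_s (s x)) M')
  | TApp M' A => TApp (tm_subst s M') A
  end.

Definition sinst (N : tm) : nat -> tm :=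
  fun n => match n with 0 => N | S m => Var m end.

(* contexts: term variable i has type and stage (nth i) *)
Definition ctx := list (ty * trans).

Definition ctx_tshift (G : ctx) : ctx :=
  map (fun p => (ty_tsubst tshift_s (fst p), tr_subst tshift_s (snd p))) G.

Inductive has_type : ctx -> trans -> tm -> ty -> Prop :=
| T_Var : forall G A x t,
    nth_error G x = Some (t, A) -> has_type G A (Var x) t
| T_Abs : forall G A t M s,
    has_type ((t, A) :: G) A M s -> has_type G A (Lam t M) (TArr t s)
| T_App : forall G A M N t s,
    has_type G A M (TArr t s) -> has_type G A N t -> has_type G A (App M N) s
| T_Quote : forall G A a M t,
    has_type G (A ++ [a]) M t -> has_type G A (Quote a M) (TQ a t)
| T_Unquote : forall G A a M t,
    has_type G A M (TQ a t) -> has_type G (A ++ [a]) (Unquote a M) t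
| T_Gen : forall G A M t,
    (* fresh alpha = index 0; the context and stage are shifted *)
    has_type (ctx_tshift G) (tr_subst tshift_s A) M t ->
    has_type G A (TLam M) (TAll t)
| T_Ins : forall G A M t B,
    has_type G A M (TAll t) -> has_type G A (TApp M B) (ty_tsubst (tinst B) t).

Inductive step : tm -> tm -> Prop :=
| S_Beta : forall t M N, step (App (Lam t M) N) (tm_subst (sinst N) M)
| S_QU : forall a M, step (Unquote a (Quote a M)) M
| S_TBeta : forall M A, step (TApp (TLam M) A) (tm_tsubst (tinst A) M)
| S_App1 : forall M M' N, step M M' -> step (App M N) (App M' N)
| S_App2 : forall M N N', step N N' -> step (App M N) (App M N')
| S_Lam : forall t M M', step M M' -> step (Lam t M) (Lam t M')
| S_Quote : forall a M M', step M M' -> step (Quote a M) (Quote a M')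
| S_Unquote : forall a M M', step M M' -> step (Unquote a M) (Unquote a M')
| S_TLam : forall M M', step M M' -> step (TLam M) (TLam M')
| S_TApp : forall M M' A, step M M' -> step (TApp M A) (TApp M' A).

(* Quotations, unquotations, stages and transition abstractions carry no
   computational content: erasing them maps a typed term of lambda^|> to a
   simply typed lambda-term (types keep only their arrow structure, since
   there are no type variables).  Every beta-step of the original term is a
   beta-step of its erasure, which is strongly normalizing by Tait's
   reducibility argument; the remaining steps leave the erasure unchanged but
   decrease the pair (number of transition abstractions, size)
   lexicographically. *)

From Stdlib Require Import List Arith Lia FunctionalExtensionality.
From Stdlib Require Import Wellfounded Relation_Operators.

(** * Strong normalization of the simply typed lambda-calculus *)

Inductive uterm : Type :=
| UVar : nat -> uterm
| UApp : uterm -> uterm -> uterm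
| ULam : uterm -> uterm.

Inductive sty : Type :=
| SBase : sty
| SArr : sty -> sty -> sty.

Definition up_ren (r : nat -> nat) : nat -> nat :=
  fun n => match n with 0 => 0 | S m => S (r m) end.

Fixpoint uren (r : nat -> nat) (u : uterm) : uterm :=
  match u with
  | UVar x => UVar (r x)
  | UApp u1 u2 => UApp (uren r u1) (uren r u2)
  | ULam u' => ULam (uren (up_ren r) u')
  end.

Definition up_usubst (s : nat -> uterm) : nat -> uterm :=
  fun n => match n with 0 => UVar 0 | S m => uren S (s m) end.

Fixpoint usubst (s : nat -> uterm) (u : uterm) : uterm :=
  match u with
  | UVar x => s x
  | UApp u1 u2 => UApp (usubst s u1) (usubst s u2)
  | ULam u' => ULam (usubst (up_usubst s) u')
  end.

Definition usinst (v : uterm) : nat -> uterm :=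
  fun n => match n with 0 => v | S m => UVar m end.

Inductive ustep : uterm -> uterm -> Prop :=
| U_Beta : forall u v, ustep (UApp (ULam u) v) (usubst (usinst v) u)
| U_App1 : forall u u' v, ustep u u' -> ustep (UApp u v) (UApp u' v)
| U_App2 : forall u v v', ustep v v' -> ustep (UApp u v) (UApp u v')
| U_Lam : forall u u', ustep u u' -> ustep (ULam u) (ULam u').

Inductive stlc_typed : list sty -> uterm -> sty -> Prop :=
| ST_Var : forall G x T, nth_error G x = Some T -> stlc_typed G (UVar x) T
| ST_Lam : forall G u T1 T2,
    stlc_typed (T1 :: G) u T2 -> stlc_typed G (ULam u) (SArr T1 T2)
| ST_App : forall G u v T1 T2,
    stlc_typed G u (SArr T1 T2) -> stlc_typed G v T1 -> stlc_typed G (UApp u v) T2.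

Lemma uren_uren (u : uterm) : forall r r',
  uren r (uren r' u) = uren (fun n => r (r' n)) u.
Proof.
  induction u; intros; simpl; f_equal; auto.
  rewrite IHu. f_equal. extensionality n. destruct n; reflexivity.
Qed.

Lemma usubst_uren (u : uterm) : forall s r,
  usubst s (uren r u) = usubst (fun n => s (r n)) u.
Proof.
  induction u; intros; simpl; f_equal; auto.
  rewrite IHu. f_equal. extensionality n. destruct n; reflexivity.
Qed.

Lemma uren_usubst (u : uterm) : forall s r,
  uren r (usubst s u) = usubst (fun n => uren r (s n)) u.
Proof.
  induction u; intros; simpl; f_equal; auto.
  rewrite IHu. f_equal. extensionality n. destruct n; simpl; auto.
  rewrite !uren_uren. reflexivity.
Qed.

Lemma usubst_usubst (u : uterm) : forall s s',
  usubst s' (usubst s u) = usubst (fun n => usubst s' (s n)) u.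
Proof.
  induction u; intros; simpl; f_equal; auto.
  rewrite IHu. f_equal. extensionality n. destruct n; simpl; auto.
  rewrite usubst_uren, uren_usubst. reflexivity.
Qed.

Lemma usubst_var (u : uterm) : usubst UVar u = u.
Proof.
  induction u; simpl; f_equal; auto.
  replace (up_usubst UVar) with UVar; auto.
  extensionality n; destruct n; reflexivity.
Qed.

Lemma usubst_up_usinst (s : nat -> uterm) (u v : uterm) :
  usubst (usinst v) (usubst (up_usubst s) u)
  = usubst (fun n => match n with 0 => v | S m => s m end) u.
Proof.
  rewrite usubst_usubst. f_equal. extensionality n. destruct n; simpl; auto.
  rewrite usubst_uren. apply usubst_var.
Qed.

Lemma ustep_usubst (u u' : uterm) : ustep u u' ->
  forall s, ustep (usubst s u) (usubst s u').
Proof.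
  induction 1; intros; simpl; try (constructor; auto; fail).
  replace (usubst s (usubst (usinst v) u)) with
    (usubst (usinst (usubst s v)) (usubst (up_usubst s) u)).
  - constructor.
  - rewrite usubst_up_usinst, usubst_usubst.
    f_equal. extensionality n. destruct n; reflexivity.
Qed.

Definition SN : uterm -> Prop := Acc (fun v u => ustep u v).

Lemma SN_of_usubst (s : nat -> uterm) (u : uterm) : SN (usubst s u) -> SN u.
Proof.
  intros H. remember (usubst s u) as w eqn:Hw. revert u Hw.
  induction H as [w _ IH]; intros u Hw; subst.
  constructor. intros u' Hu'. eapply IH; [apply ustep_usubst, Hu' | reflexivity].
Qed.

Lemma SN_of_app_left (u v : uterm) : SN (UApp u v) -> SN u.
Proof.
  intros H. remember (UApp u v) as w eqn:Hw. revert u Hw.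
  induction H as [w _ IH]; intros u Hw; subst.
  constructor. intros u' Hu'. eapply IH; [apply U_App1, Hu' | reflexivity].
Qed.

Fixpoint reducible (T : sty) (u : uterm) : Prop :=
  match T with
  | SBase => SN u
  | SArr T1 T2 => forall v, reducible T1 v -> reducible T2 (UApp u v)
  end.

Definition neutral (u : uterm) : Prop :=
  match u with ULam _ => False | _ => True end.

(* Girard's (CR1)-(CR3); they are proved together because (CR1) at an arrow
   type needs (CR3) at its domain to produce the reducible variable [UVar 0]. *)
Lemma reducible_candidate (T : sty) :
  (forall u, reducible T u -> SN u) /\
  (forall u u', reducible T u -> ustep u u' -> reducible T u') /\
  (forall u, neutral u -> (forall u', ustep u u' -> reducible T u') -> reducible T u).
Proof.
  induction T as [|T1 [CR1a [CR2a CR3a]] T2 [CR1b [CR2b CR3b]]]; simpl.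
  - split; [|split]; auto.
    + intros u u' [H] Hu'. apply H, Hu'.
    + intros u _ H. constructor. exact H.
  - split; [|split].
    + intros u Hu.
      assert (Hvar : reducible T1 (UVar 0))
        by (apply CR3a; [exact I | intros u' Hs; inversion Hs]).
      apply SN_of_app_left with (UVar 0), CR1b, Hu, Hvar.
    + intros u u' Hu Hs v Hv. apply CR2b with (UApp u v); [apply Hu, Hv | apply U_App1, Hs].
    + intros u Hn Hred v Hv.
      assert (Hsn : SN v) by auto.
      induction Hsn as [v _ IHv].
      apply CR3b; [exact I|]. intros w Hs. inversion Hs; subst.
      * contradiction.
      * apply Hred; auto.
      * apply IHv; eauto.
Qed.

Lemma reducible_SN (T : sty) (u : uterm) : reducible T u -> SN u.
Proof. apply (reducible_candidate T). Qed.

Lemma reducible_ustep (T : sty) (u u' : uterm) :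
  reducible T u -> ustep u u' -> reducible T u'.
Proof. apply (reducible_candidate T). Qed.

Lemma reducible_neutral (T : sty) (u : uterm) :
  neutral u -> (forall u', ustep u u' -> reducible T u') -> reducible T u.
Proof. apply (reducible_candidate T). Qed.

Lemma reducible_var (T : sty) (x : nat) : reducible T (UVar x).
Proof. apply reducible_neutral; [exact I|]. intros u' H; inversion H. Qed.

Lemma reducible_lam (T1 T2 : sty) (u : uterm) :
  (forall v, reducible T1 v -> reducible T2 (usubst (usinst v) u)) ->
  reducible (SArr T1 T2) (ULam u).
Proof.
  intros H. simpl.
  assert (Hu : SN u)
    by apply SN_of_usubst with (usinst (UVar 0)), reducible_SN with T2, H, reducible_var.
  revert H. induction Hu as [u _ IHu]. intros H v Hv.
  assert (Hsn : SN v) by (eapply reducible_SN; eauto).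
  induction Hsn as [v _ IHv].
  apply reducible_neutral; [exact I|]. intros w Hs. inversion Hs; subst.
  - apply H, Hv.
  - match goal with Hl : ustep (ULam _) _ |- _ => inversion Hl; subst end.
    apply IHu; auto.
    intros v' Hv'. eapply reducible_ustep; [apply H, Hv' | apply ustep_usubst; auto].
  - apply IHv; auto. eapply reducible_ustep; eauto.
Qed.

Lemma reducible_usubst (G : list sty) (u : uterm) (T : sty) : stlc_typed G u T ->
  forall s, (forall x Tx, nth_error G x = Some Tx -> reducible Tx (s x)) ->
  reducible T (usubst s u).
Proof.
  induction 1 as [G x T Hx | G u T1 T2 _ IH | G u v T1 T2 _ IHu _ IHv];
    intros s Hs; simpl.
  - apply Hs, Hx.
  - apply reducible_lam. intros v Hv. rewrite usubst_up_usinst.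
    apply IH. intros [|x] Tx Hx; simpl in Hx.
    + injection Hx as <-. exact Hv.
    + apply Hs, Hx.
  - apply (IHu s Hs), IHv, Hs.
Qed.

Lemma stlc_typed_SN (G : list sty) (u : uterm) (T : sty) : stlc_typed G u T -> SN u.
Proof.
  intros H. apply reducible_SN with T. rewrite <- usubst_var.
  apply reducible_usubst with G; auto using reducible_var.
Qed.

(** * Erasure of lambda^|> into the simply typed lambda-calculus *)

Fixpoint erase_ty (t : ty) : sty :=
  match t with
  | TBase _ => SBase
  | TArr t1 t2 => SArr (erase_ty t1) (erase_ty t2)
  | TQ _ t' => erase_ty t'
  | TAll t' => erase_ty t'
  end.

Fixpoint erase (M : tm) : uterm :=
  match M with
  | Var x => UVar x
  | App M1 M2 => UApp (erase M1) (erase M2)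
  | Lam _ M' => ULam (erase M')
  | Quote _ M' => erase M'
  | Unquote _ M' => erase M'
  | TLam M' => erase M'
  | TApp M' _ => erase M'
  end.

Lemma erase_ty_tsubst (t : ty) : forall s, erase_ty (ty_tsubst s t) = erase_ty t.
Proof.
  assert (HQs : forall A t', erase_ty (tyQs A t') = erase_ty t')
    by (induction A; simpl; auto).
  induction t; intros; simpl; rewrite ?HQs; congruence.
Qed.

Lemma erase_tsubst (M : tm) : forall s, erase (tm_tsubst s M) = erase M.
Proof.
  assert (HQs : forall A N, erase (tmQs A N) = erase N)
    by (induction A; simpl; auto).
  assert (HUs : forall A N, erase (tmUs A N) = erase N)
    by (unfold tmUs; induction A; intros; simpl; rewrite ?IHA; auto).
  induction M; intros; simpl; rewrite ?HQs, ?HUs; congruence.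
Qed.

Lemma erase_ren (M : tm) : forall r, erase (tm_ren r M) = uren r (erase M).
Proof. induction M; intros; simpl; rewrite ?IHM1, ?IHM2, ?IHM; reflexivity. Qed.

Lemma erase_subst (M : tm) : forall s,
  erase (tm_subst s M) = usubst (fun x => erase (s x)) (erase M).
Proof.
  induction M; intros; simpl; rewrite ?IHM1, ?IHM2, ?IHM; auto.
  - do 2 f_equal. extensionality n. destruct n; simpl; auto using erase_ren.
  - f_equal. extensionality n. apply erase_tsubst.
Qed.

Definition erase_ctx (G : ctx) : list sty := map (fun p => erase_ty (fst p)) G.

Lemma erase_has_type (G : ctx) (A : trans) (M : tm) (t : ty) :
  has_type G A M t -> stlc_typed (erase_ctx G) (erase M) (erase_ty t).
Proof.
  unfold erase_ctx. induction 1; simpl; auto.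
  - constructor. erewrite map_nth_error; eauto. reflexivity.
  - constructor. auto.
  - econstructor; eauto.
  - unfold ctx_tshift in IHhas_type. rewrite map_map in IHhas_type.
    erewrite map_ext; [exact IHhas_type|]. intros. symmetry. apply erase_ty_tsubst.
  - rewrite erase_ty_tsubst. auto.
Qed.

(** * Steps invisible to erasure *)

Fixpoint tlam_count (M : tm) : nat :=
  match M with
  | Var _ => 0
  | App M1 M2 => tlam_count M1 + tlam_count M2
  | Lam _ M' | Quote _ M' | Unquote _ M' | TApp M' _ => tlam_count M'
  | TLam M' => S (tlam_count M')
  end.

Fixpoint tm_size (M : tm) : nat :=
  match M with
  | Var _ => 1
  | App M1 M2 => S (tm_size M1 + tm_size M2)
  | Lam _ M' | Quote _ M' | Unquote _ M' | TLam M' | TApp M' _ => S (tm_size M')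
  end.

Lemma tlam_count_tsubst (M : tm) : forall s, tlam_count (tm_tsubst s M) = tlam_count M.
Proof.
  assert (HQs : forall A N, tlam_count (tmQs A N) = tlam_count N)
    by (induction A; simpl; auto).
  assert (HUs : forall A N, tlam_count (tmUs A N) = tlam_count N)
    by (unfold tmUs; induction A; intros; simpl; rewrite ?IHA; auto).
  induction M; intros; simpl; rewrite ?HQs, ?HUs; auto.
Qed.

Definition lex_lt (p q : nat * nat) : Prop :=
  fst p < fst q \/ (fst p = fst q /\ snd p < snd q).

Lemma lex_lt_wf : well_founded lex_lt.
Proof.
  apply wf_incl with (slexprod nat nat lt lt); [|apply wf_slexprod; apply lt_wf].
  intros [a b] [a' b'] [H | [H1 H2]]; simpl in *; [apply left_slex, H|].
  subst. apply right_slex, H2.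
Qed.

Definition tm_measure (M : tm) : nat * nat := (tlam_count M, tm_size M).

Definition erasure_order (N M : tm) : Prop :=
  ustep (erase M) (erase N) \/
  (erase N = erase M /\ lex_lt (tm_measure N) (tm_measure M)).

Lemma step_erasure_order (M N : tm) : step M N -> erasure_order N M.
Proof.
  unfold erasure_order, lex_lt, tm_measure.
  induction 1; simpl;
    try (destruct IHstep as [Hs | [He Hlt]];
         [left; auto using ustep | simpl in Hlt; right; split; [congruence | lia]]; fail).
  - left. rewrite erase_subst.
    replace (fun x => erase (sinst N x)) with (usinst (erase N)).
    + constructor.
    + extensionality n; destruct n; reflexivity.
  - right. split; [reflexivity | right; lia].
  - right. rewrite erase_tsubst, tlam_count_tsubst. split; [reflexivity | left; lia].
Qed.

Lemma acc_erasure_order (M : tm) : SN (erase M) -> Acc erasure_order M.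
Proof.
  intros H. remember (erase M) as u eqn:Hu. revert M Hu.
  induction H as [u _ IHu]; intros M Hu; subst.
  pose proof (lex_lt_wf (tm_measure M)) as Hm.
  remember (tm_measure M) as m eqn:Hmeq. revert M Hmeq IHu.
  induction Hm as [m _ IHm]; intros M Hmeq IHu; subst.
  constructor. intros N [Hs | [He Hlt]].
  - apply IHu with (erase N); auto.
  - apply IHm with (tm_measure N); auto. rewrite He. exact IHu.
Qed.

Lemma acc_no_infinite_chain {X : Type} (R : X -> X -> Prop) (x : X) :
  Acc (fun y x => R x y) x -> ~ (exists f : nat -> X, f 0 = x /\ forall n, R (f n) (f (S n))).
Proof.
  induction 1 as [x _ IH]. intros [f [H0 Hf]].
  apply (IH (f 1)); [rewrite <- H0; apply Hf|].
  exists (fun n => f (S n)). auto.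
Qed.

Theorem mainTheorem3 (G : ctx) (A : trans) (M : tm) (t : ty) :
  has_type G A M t ->
  ~ (exists f : nat -> tm, f 0 = M /\ forall n, step (f n) (f (S n))).
Proof.
  intros Htyped.
  apply acc_no_infinite_chain.
  apply Acc_incl with erasure_order; [intros N M'; apply step_erasure_order|].
  apply acc_erasure_order, stlc_typed_SN with (erase_ctx G) (erase_ty t).
  apply erase_has_type with A, Htyped.
Qed.
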